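(* Let $n\ge 2$ and let $D$ be an $n\times n$ unit spherical Euclidean distance matrix (EDM) of embedding dimension $r$ such that every off-diagonal entry of $D$ is $\ge 2$. Define $\Delta$ by $D = 2(E-I)+2\Delta$ and let $w\in\mathbb{R}^n$ satisfy $Dw=e$. If $\Delta$ is irreducible, then $r=n-1$ (i.e., $D$ is the EDM of a simplex) and $w>\mathbf{0}$ (every entry of $w$ is positive).
   Context: $e$ denotes the all-ones vector in $\mathbb{R}^n$, $E$ the $n\times n$ all-ones matrix, $I$ the identity matrix. An $n\times n$ matrix $D=(d_{ij})$ is a Euclidean distance matrix (EDM) if there exist points $p^1,\dots,p^n$ in some Euclidean space with $d_{ij}=\|p^i-p^j\|^2$; the dimension of the affine span of these points is the embedding dimension of $D$; $D$ is the EDM of a simplex if its embedding dimension is $n-1$. $D$ is a unit spherical EDM if such points can be chosen on a sphere of radius $1$. A nonnegative $n\times n$ matrix $A$ is reducible if $A$ is the $1\times 1$ zero matrix, or $n\ge 2$ and there is a permutation matrix $Q$ with $QAQ^T=\begin{pmatrix}A_{11}&A_{12}\\ \mathbf{0}&A_{22}\end{pmatrix}$ with $A_{11},A_{22}$ square; otherwise $A$ is irreducible. *)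

From HB Require Import structures.
From mathcomp Require Import all_boot all_order all_algebra all_fingroup.
From mathcomp Require Import reals.
Set Implicit Arguments. Unset Strict Implicit. Unset Printing Implicit Defensive.
Import Order.TTheory GRing.Theory Num.Theory.
Local Open Scope ring_scope.

Section EDM.
Variable R : realType.

Definition sqdist (k : nat) (x y : 'rV[R]_k) : R :=
  \sum_(l < k) (x ord0 l - y ord0 l) ^+ 2.

Definition realizes (n k : nat) (D : 'M[R]_n) (p : 'I_n -> 'rV[R]_k) : Prop :=
  forall i j, D i j = sqdist (p i) (p j).

Definition is_EDM (n : nat) (D : 'M[R]_n) : Prop :=
  exists k (p : 'I_n -> 'rV[R]_k), realizes D p.

(* dimension of the affine span of p_1..p_n: rank of the points
   translated by their centroid *)
Definition centroid (n k : nat) (p : 'I_n -> 'rV[R]_k) : 'rV[R]_k :=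
  (n%:R)^-1 *: \sum_(i < n) p i.

Definition affdim (n k : nat) (p : 'I_n -> 'rV[R]_k) : nat :=
  \rank (\matrix_(i < n) (p i - centroid p)).

Definition embdim_is (n : nat) (D : 'M[R]_n) (r : nat) : Prop :=
  exists k (p : 'I_n -> 'rV[R]_k), realizes D p /\ affdim p = r.

Definition unit_spherical_EDM (n : nat) (D : 'M[R]_n) : Prop :=
  exists k (p : 'I_n -> 'rV[R]_k) (c : 'rV[R]_k),
    realizes D p /\ forall i, sqdist (p i) c = 1.

Definition reducible (n : nat) (A : 'M[R]_n) : Prop :=
  (n = 1%N /\ A = 0) \/
  ((2 <= n)%N /\ exists (s : 'S_n) (k : nat), (0 < k < n)%N /\
     forall a b : 'I_n, (k <= a)%N -> (b < k)%N ->
       (perm_mx s *m A *m (perm_mx s)^T) a b = 0).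

Definition irreducible (n : nat) (A : 'M[R]_n) : Prop := ~ reducible A.

End EDM.

From HB Require Import structures.
From mathcomp Require Import all_boot all_order all_algebra all_fingroup.
From mathcomp Require Import reals.
From mathcomp Require Import ring lra zify.
Import Order.TTheory GRing.Theory Num.Theory.
Local Open Scope ring_scope.
Set Implicit Arguments. Unset Strict Implicit. Unset Printing Implicit Defensive.

(* Write the points as [p_i = c + u_i] with unit vectors [u_i].  Then
   [D = 2 (E - G)] for the Gram matrix [G] of the [u_i]: the bound [D_ij >= 2]
   says that the [u_i] are pairwise obtuse, and [Delta] is the off-diagonal
   part of [-G], so its irreducibility means that the [u_i] cannot be split
   into two mutually orthogonal groups.  For such a family, if
   [sum_i b_i u_i = 0] then the positive and negative parts of [b] give
   vanishing combinations separately, and each of them has empty or full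
   support; so [b] is zero or has constant strict sign.  Hence the [p_i] are
   affinely independent and [r = n - 1].  If [D w = e], put [m = 2 sum w - 1]:
   either [m = 0], [sum_i w_i u_i = 0] and [w] has constant sign with positive
   sum, or [z = 2 w / m] solves [G z = e], which for an obtuse family forces
   [z >= 1] and then [m > 0]. *)

Section DotProduct.
Variables (R : realType) (k : nat).
Implicit Types x y z : 'rV[R]_k.

Definition dotv x y : R := (x *m y^T) ord0 ord0.

Lemma dotvE x y : dotv x y = \sum_(l < k) x ord0 l * y ord0 l.
Proof. by rewrite /dotv mxE; apply: eq_bigr => l _; rewrite mxE. Qed.

Lemma dotvC x y : dotv x y = dotv y x.
Proof. by rewrite !dotvE; apply: eq_bigr => l _; rewrite mulrC. Qed.

Lemma dotv0 x : dotv x 0 = 0.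
Proof. by rewrite /dotv trmx0 mulmx0 mxE. Qed.

Lemma dotvBl x y z : dotv (x - y) z = dotv x z - dotv y z.
Proof. by rewrite /dotv mulmxBl !mxE. Qed.

Lemma dotvBr x y z : dotv x (y - z) = dotv x y - dotv x z.
Proof. by rewrite dotvC dotvBl !(dotvC x). Qed.

Lemma dotvZr a x y : dotv x (a *: y) = a * dotv x y.
Proof. by rewrite /dotv linearZ /= -scalemxAr mxE. Qed.

Lemma dotvBB x y : dotv (x - y) (x - y) = dotv x x + dotv y y - 2 * dotv x y.
Proof. by rewrite dotvBl !dotvBr (dotvC y x); ring. Qed.

Lemma dotv_ge0 x : 0 <= dotv x x.
Proof. by rewrite dotvE; apply: sumr_ge0 => l _; exact: sqr_ge0. Qed.

Lemma dotv_eq0 x : (dotv x x == 0) = (x == 0).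
Proof.
apply/eqP/eqP => [|->]; last exact: dotv0.
rewrite dotvE => /(psumr_eq0P (fun l _ => sqr_ge0 (x ord0 l))) x0.
apply/rowP => l; rewrite mxE.
by have /eqP := x0 l isT; rewrite mulf_eq0 orbb => /eqP.
Qed.

Lemma sqdist_dotv x y : sqdist x y = dotv (x - y) (x - y).
Proof. by rewrite dotvE; apply: eq_bigr => l _; rewrite !mxE expr2. Qed.

Lemma sqdist_sphere x y c : sqdist x c = 1 -> sqdist y c = 1 ->
  sqdist x y = 2 - 2 * dotv (x - c) (y - c).
Proof.
rewrite !sqdist_dotv => xc1 yc1.
have -> : x - y = (x - c) - (y - c) by rewrite opprB addrA subrK.
by rewrite dotvBB xc1 yc1.
Qed.

End DotProduct.

Section PositivePart.
Variables (R : realType) (I : Type).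
Implicit Types a : I -> R.

Definition pos_part a i : R := if 0 <= a i then a i else 0.
Definition neg_part a i : R := if 0 <= a i then 0 else - a i.

Lemma pos_part_ge0 a i : 0 <= pos_part a i.
Proof. by rewrite /pos_part; case: ifP. Qed.

Lemma neg_part_ge0 a i : 0 <= neg_part a i.
Proof.
by rewrite /neg_part; case: ifP => // /negbT; rewrite -ltNge oppr_ge0 => /ltW.
Qed.

Lemma pos_partBneg_part a i : pos_part a i - neg_part a i = a i.
Proof. by rewrite /pos_part /neg_part; case: ifP; rewrite ?subr0 ?sub0r ?opprK. Qed.

Lemma pos_partMneg_part a i : pos_part a i * neg_part a i = 0.
Proof. by rewrite /pos_part /neg_part; case: ifP; rewrite ?mulr0 ?mul0r. Qed.

End PositivePart.

Section ObtuseFamily.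
Variables (R : realType) (k n : nat) (u : 'I_n -> 'rV[R]_k).

Definition lincomb (a : 'I_n -> R) : 'rV[R]_k := \sum_i a i *: u i.

Lemma dotv_lincombl a y : dotv (lincomb a) y = \sum_i a i * dotv (u i) y.
Proof.
rewrite /dotv /lincomb mulmx_suml summxE.
by apply: eq_bigr => i _; rewrite -scalemxAl mxE.
Qed.

Lemma dotv_lincombr a y : dotv y (lincomb a) = \sum_i a i * dotv y (u i).
Proof. by rewrite dotvC dotv_lincombl; under eq_bigr do rewrite dotvC. Qed.

Lemma lincomb_pos_neg a :
  lincomb a = lincomb (pos_part a) - lincomb (neg_part a).
Proof.
rewrite /lincomb -sumrB; apply: eq_bigr => i _.
by rewrite -scalerBl pos_partBneg_part.
Qed.

Hypothesis u_obtuse : forall i j, i != j -> dotv (u i) (u j) <= 0.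

Lemma dotv_lincomb_disjoint_le0 a b :
  (forall i, 0 <= a i) -> (forall i, 0 <= b i) -> (forall i, a i * b i = 0) ->
  dotv (lincomb a) (lincomb b) <= 0.
Proof.
move=> a_ge0 b_ge0 ab0; rewrite dotv_lincombl; apply: sumr_le0 => i _.
rewrite dotv_lincombr mulr_sumr; apply: sumr_le0 => j _; rewrite mulrA.
have [<-|ij] := eqVneq i j; first by rewrite ab0 mul0r.
exact: mulr_ge0_le0 (mulr_ge0 (a_ge0 i) (b_ge0 j)) (u_obtuse ij).
Qed.

Lemma lincomb_eq0_parts a : lincomb a = 0 ->
  lincomb (pos_part a) = 0 /\ lincomb (neg_part a) = 0.
Proof.
move=> a0; have parts_eq : lincomb (pos_part a) = lincomb (neg_part a).
  by apply/eqP; rewrite -subr_eq0 -lincomb_pos_neg a0.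
suff : lincomb (pos_part a) == 0 by move/eqP; split; rewrite // -parts_eq.
rewrite -dotv_eq0 eq_le dotv_ge0 andbT {2}parts_eq.
apply: dotv_lincomb_disjoint_le0; [exact: pos_part_ge0 | exact: neg_part_ge0 |].
exact: pos_partMneg_part.
Qed.

Hypothesis u_unit : forall i, dotv (u i) (u i) = 1.

(* Pairing the equations with the negative part [z-] of [z] gives
   [sum z- = <Z-, Z+> - |Z-|^2 <= 0] for [Z+-] the combinations of [z+-]. *)
Lemma dotv_lincomb_eq1_ge1 z :
  (forall i, dotv (u i) (lincomb z) = 1) -> forall i, 1 <= z i.
Proof.
move=> z1.
have z_ge0 i : 0 <= z i.
  have sum_neg : \sum_j neg_part z j = dotv (lincomb (neg_part z)) (lincomb z).
    by rewrite dotv_lincombl; apply: eq_bigr => j _; rewrite z1 mulr1.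
  have sum_neg_le0 : \sum_j neg_part z j <= 0.
    rewrite sum_neg [lincomb z]lincomb_pos_neg dotvBr.
    have := dotv_ge0 (lincomb (neg_part z)).
    have := dotv_lincomb_disjoint_le0 (neg_part_ge0 z) (pos_part_ge0 z)
      (fun j => etrans (mulrC _ _) (pos_partMneg_part z j)).
    lra.
  have sum_neg0 : \sum_j neg_part z j = 0.
    by apply/le_anti; rewrite sum_neg_le0 sumr_ge0 // => j _; exact: neg_part_ge0.
  have := psumr_eq0P (fun j _ => neg_part_ge0 z j) sum_neg0 (i := i) isT.
  by rewrite -[z i]pos_partBneg_part => ->; rewrite subr0 pos_part_ge0.
move=> i; have := z1 i; rewrite dotv_lincombr (bigD1 i) //= u_unit mulr1.
have : \sum_(j | j != i) z j * dotv (u i) (u j) <= 0.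
  apply: sumr_le0 => j ji; apply: mulr_ge0_le0 (z_ge0 j) (u_obtuse _).
  by rewrite eq_sym.
lra.
Qed.

Definition gram_connected := forall S : {set 'I_n}, S != set0 -> S != setT ->
  ~ (forall x y, x \notin S -> y \in S -> dotv (u x) (u y) = 0).

Hypothesis u_connected : gram_connected.

Lemma lincomb_eq0_nonneg b : (forall i, 0 <= b i) -> lincomb b = 0 ->
  (forall i, b i = 0) \/ (forall i, 0 < b i).
Proof.
move=> b_ge0 b0; pose S := [set i | 0 < b i].
have bS i : i \notin S -> b i = 0.
  by rewrite inE -leNgt => bi; apply/le_anti; rewrite bi b_ge0.
have [S0|SN0] := eqVneq S set0; first by left => i; apply: bS; rewrite S0 in_set0.
have [ST|SNT] := eqVneq S setT.
  by right => i; have := in_setT i; rewrite -ST inE.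
(* For [x] outside the support, [<u x, lincomb b> = 0] is a sum of
   nonpositive terms, so [u x] is orthogonal to the [u y] of the support. *)
exfalso; apply: (u_connected SN0 SNT) => x y /bS bx yS.
have term_ge0 j : 0 <= - (b j * dotv (u x) (u j)).
  rewrite oppr_ge0; have [<-|xj] := eqVneq x j; first by rewrite bx mul0r.
  exact: mulr_ge0_le0 (b_ge0 j) (u_obtuse xj).
have : \sum_j - (b j * dotv (u x) (u j)) = 0.
  by rewrite sumrN -dotv_lincombr b0 dotv0 oppr0.
move=> /(psumr_eq0P (fun j _ => term_ge0 j)) /(_ y isT) /eqP.
rewrite oppr_eq0 mulf_eq0 => /orP[/eqP by0|/eqP //].
by move: yS; rewrite inE by0 ltxx.
Qed.

Lemma lincomb_eq0_sign b : lincomb b = 0 ->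
  [\/ forall i, 0 < b i, forall i, b i = 0 | forall i, b i < 0].
Proof.
case/lincomb_eq0_parts => /(lincomb_eq0_nonneg (pos_part_ge0 b)) P.
move=> /(lincomb_eq0_nonneg (neg_part_ge0 b)) N.
have bE i : b i = pos_part b i - neg_part b i by rewrite pos_partBneg_part.
case: P => [P0|Ppos]; case: N => [N0|Npos].
- by constructor 2 => i; rewrite bE P0 N0 subrr.
- by constructor 3 => i; rewrite bE P0 sub0r oppr_lt0.
- by constructor 1 => i; rewrite bE N0 subr0.
- constructor 2 => i; move: (mulr_gt0 (Ppos i) (Npos i)).
  by rewrite pos_partMneg_part ltxx.
Qed.

Lemma lincomb_eq0_sum_eq0 b :
  lincomb b = 0 -> \sum_i b i = 0 -> forall i, b i = 0.
Proof.
move=> /lincomb_eq0_sign[b_gt0|//|b_lt0] sum0 i.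
- exact: (psumr_eq0P (fun j _ => ltW (b_gt0 j)) sum0 (i := i) isT).
- have nb_ge0 j : 0 <= - b j by rewrite oppr_ge0 ltW.
  have nsum0 : \sum_j - b j = 0 by rewrite sumrN sum0 oppr0.
  have /eqP := psumr_eq0P (fun j _ => nb_ge0 j) nsum0 (i := i) isT.
  by rewrite oppr_eq0 => /eqP.
Qed.

(* With [G] the Gram matrix of [u] and [D = 2 (E - G)], the hypothesis reads
   [D w = e]. *)
Lemma edm_equation_solution_gt0 w :
  (forall i, 2 * dotv (u i) (lincomb w) = 2 * \sum_j w j - 1) ->
  forall i, 0 < w i.
Proof.
move=> hw i; set s := \sum_j w j in hw; set m := 2 * s - 1 in hw.
have [m0|m_neq0] := eqVneq m 0.
  have w0 : lincomb w = 0.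
    apply/eqP; rewrite -dotv_eq0 dotv_lincombl big1 // => j _.
    move: (hw j); rewrite m0 => /eqP; rewrite mulf_eq0 pnatr_eq0 => /eqP->.
    by rewrite mulr0.
  have s_gt0 : 0 < s by rewrite /m in m0; lra.
  case/lincomb_eq0_sign: w0 => [//|w_eq0|w_lt0];
    move: s_gt0; rewrite ltNge => /negP[].
  - by apply: sumr_le0 => j _; rewrite w_eq0.
  - by apply: sumr_le0 => j _; rewrite ltW.
pose z j := 2 * w j / m.
have z1 j : dotv (u j) (lincomb z) = 1.
  have -> : lincomb z = (2 / m) *: lincomb w.
    rewrite /lincomb scaler_sumr; apply: eq_bigr => l _.
    by rewrite scalerA /z mulrAC.
  by rewrite dotvZr mulrAC hw mulfV.
have z_ge1 := dotv_lincomb_eq1_ge1 z1.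
have sum_z : (\sum_j z j) * m = 2 * s.
  by rewrite mulr_suml /s mulr_sumr; apply: eq_bigr => j _; rewrite /z divfK.
have z_le_sum : z i <= \sum_j z j.
  rewrite (bigD1 i) //= lerDl; apply: sumr_ge0 => j _.
  exact: le_trans ler01 (z_ge1 j).
(* [sum z >= 1] and [(sum z) m = m + 1] *)
have m_gt0 : 0 < m by rewrite /m in sum_z *; have := z_ge1 i; nra.
have : z i * m = 2 * w i by rewrite /z divfK.
have := z_ge1 i; nra.
Qed.

End ObtuseFamily.

Section AffineDependence.
Variables (R : realType) (n : nat).

Definition affinely_independent k (q : 'I_n -> 'rV[R]_k) := forall b : 'I_n -> R,
  \sum_i b i = 0 -> lincomb q b = 0 -> forall i, b i = 0.

Lemma lincomb_translate k (q : 'I_n -> 'rV[R]_k) c b :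
  lincomb (fun i => q i - c) b = lincomb q b - (\sum_i b i) *: c.
Proof.
by rewrite /lincomb scaler_suml -sumrB; apply: eq_bigr => i _; rewrite scalerBr.
Qed.

Lemma sqdist_quadratic_form k (q : 'I_n -> 'rV[R]_k) b : \sum_i b i = 0 ->
  \sum_i \sum_j b i * b j * sqdist (q i) (q j)
    = - 2 * dotv (lincomb q b) (lincomb q b).
Proof.
move=> b0.
have norm_l : \sum_i \sum_j b i * b j * dotv (q i) (q i) = 0.
  by rewrite big1 // => i _; rewrite -mulr_suml -mulr_sumr b0 mulr0 mul0r.
have norm_r : \sum_i \sum_j b i * b j * dotv (q j) (q j) = 0.
  by rewrite exchange_big big1 // => j _; rewrite -!mulr_suml b0 !mul0r.
have cross : \sum_i \sum_j b i * b j * dotv (q i) (q j)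
    = dotv (lincomb q b) (lincomb q b).
  rewrite dotv_lincombl; apply: eq_bigr => i _.
  by rewrite dotv_lincombr mulr_sumr; apply: eq_bigr => j _; rewrite mulrA.
transitivity (\sum_i \sum_j b i * b j * dotv (q i) (q i)
  + \sum_i \sum_j b i * b j * dotv (q j) (q j)
  - 2 * \sum_i \sum_j b i * b j * dotv (q i) (q j)).
  rewrite mulr_sumr -big_split -sumrB; apply: eq_bigr => i _ /=.
  rewrite mulr_sumr -big_split -sumrB; apply: eq_bigr => j _ /=.
  by rewrite sqdist_dotv dotvBB; ring.
by rewrite norm_l norm_r cross; ring.
Qed.

Lemma realizes_affinely_independent (D : 'M[R]_n) k k'
    (p : 'I_n -> 'rV[R]_k) (q : 'I_n -> 'rV[R]_k') :
  realizes D p -> realizes D q -> affinely_independent p -> affinely_independent q.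
Proof.
move=> Dp Dq p_indep b b0 qb0; apply: p_indep => //; apply/eqP; rewrite -dotv_eq0.
have E : \sum_i \sum_j b i * b j * sqdist (p i) (p j)
       = \sum_i \sum_j b i * b j * sqdist (q i) (q j).
  by apply: eq_bigr => i _; apply: eq_bigr => j _; rewrite -Dp -Dq.
rewrite !sqdist_quadratic_form // qb0 dotv0 mulr0 in E.
by move/eqP: E; rewrite mulf_eq0 oppr_eq0 pnatr_eq0.
Qed.

Lemma affdim_affinely_independent k (q : 'I_n -> 'rV[R]_k) :
  (0 < n)%N -> affinely_independent q -> affdim q = n.-1.
Proof.
move=> n_gt0 q_indep; rewrite /affdim; set M := \matrix_i _.
have n_neq0 : (n%:R : R) != 0 by rewrite pnatr_eq0 -lt0n.
have mulM v :
    v *m M = lincomb q (fun i => v ord0 i) - (\sum_i v ord0 i) *: centroid q.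
  rewrite mulmx_sum_row /lincomb scaler_suml -sumrB.
  by apply: eq_bigr => i _; rewrite rowK scalerBr.
pose e : 'rV[R]_n := const_mx 1.
have e_ker : (e <= kermx M)%MS.
  apply/sub_kermxP; rewrite mulM /centroid scalerA.
  have -> : \sum_i e ord0 i = n%:R.
    by rewrite (eq_bigr (fun=> 1)) ?sumr_const ?card_ord // => i _; rewrite mxE.
  rewrite mulfV // scale1r /lincomb; apply/eqP; rewrite subr_eq0; apply/eqP.
  by apply: eq_bigr => i _; rewrite mxE scale1r.
have ker_e : (kermx M <= e)%MS.
  apply/row_subP => i.
  have : row i (kermx M) *m M = 0 by rewrite -row_mul mulmx_ker row0.
  move: (row i _) => v vM0.
  pose a := (\sum_j v ord0 j) / n%:R.
  have sum0 : \sum_j (v ord0 j - a) = 0.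
    by rewrite sumrB sumr_const card_ord -mulr_natr divfK // subrr.
  have comb0 : lincomb q (fun j => v ord0 j - a) = 0.
    rewrite /lincomb (eq_bigr (fun j => v ord0 j *: q j - a *: q j)) => [|j _].
      by rewrite sumrB -scaler_sumr; move: vM0; rewrite mulM /centroid scalerA.
    by rewrite scalerBl.
  have -> : v = a *: e.
    apply/rowP => j; rewrite !mxE mulr1; apply/eqP; rewrite -subr_eq0; apply/eqP.
    exact: (q_indep _ sum0 comb0 j).
  exact: scalemx_sub (submx_refl e).
have e_neq0 : e != 0.
  apply/eqP => /rowP /(_ (Ordinal n_gt0)); rewrite !mxE => /eqP.
  by rewrite oner_eq0.
have ker_eq : (kermx M :=: e)%MS by apply/eqmxP; rewrite ker_e e_ker.
have := mxrank_ker M; rewrite ker_eq rank_rV e_neq0.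
have := rank_leq_row M; lia.
Qed.

End AffineDependence.

Lemma perm_set_first n (S : {set 'I_n}) :
  exists s : 'S_n, forall a, (s a \in S) = (a < #|S|)%N.
Proof.
pose l := enum S ++ enum (~: S).
have size_l : size l = n by rewrite size_cat -!cardE cardsC card_ord.
have uniq_l : uniq l.
  rewrite cat_uniq !enum_uniq /= andbT; apply/hasPn => x.
  by rewrite !mem_enum inE.
pose f (a : 'I_n) := nth a l a.
have fE a b : f a = nth b l a by rewrite /f (set_nth_default b) // size_l.
have f_inj : injective f.
  move=> a b; rewrite (fE a a) (fE b a) => /eqP.
  by rewrite nth_uniq ?size_l // => /eqP/val_inj.
exists (perm f_inj) => a; rewrite permE /f nth_cat -cardE.
case: ltnP => [aS|Sa]; first by rewrite -(mem_enum S) mem_nth // -cardE.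
apply/negbTE; rewrite -in_setC -(mem_enum (~: S)) mem_nth // -cardE.
by rewrite ltn_subLR // cardsC card_ord.
Qed.

Lemma reducible_of_zero_block (R : realType) n (A : 'M[R]_n) (S : {set 'I_n}) :
  (2 <= n)%N -> S != set0 -> S != setT ->
  (forall x y, x \notin S -> y \in S -> A x y = 0) -> reducible A.
Proof.
move=> n_ge2 S0 ST A0; right; split => //.
have [s sS] := perm_set_first S.
exists s, #|S|; split.
  rewrite card_gt0 S0 -[X in (_ < X)%N]card_ord -cardsT.
  by rewrite proper_card // properT.
move=> a b Sa bS; rewrite tr_perm_mx -row_permE -col_permE !mxE.
by apply: A0; rewrite sS // -leqNgt.
Qed.

Lemma gram_connected_of_irreducible (R : realType) k n
    (u : 'I_n -> 'rV[R]_k) (A : 'M[R]_n) : (2 <= n)%N ->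
  (forall x y, x != y -> A x y = - dotv (u x) (u y)) ->
  irreducible A -> gram_connected u.
Proof.
move=> n_ge2 A_gram A_irr S S0 ST u_orth.
apply/A_irr/(reducible_of_zero_block n_ge2 S0 ST) => x y xS yS.
have xy : x != y by apply: contraNneq xS => ->.
by rewrite A_gram // u_orth // oppr0.
Qed.

Unset Implicit Arguments. Set Strict Implicit.

Theorem lemma4p3 (R : realType) (n : nat) (hn : (2 <= n)%N)
  (D : 'M[R]_n) (r : nat)
  (hD : unit_spherical_EDM D) (hr : embdim_is D r)
  (hoff : forall i j : 'I_n, i != j -> 2 <= D i j)
  (Delta : 'M[R]_n)
  (hDelta : D = 2%:R *: (const_mx 1 - 1%:M) + 2%:R *: Delta)
  (w : 'cV[R]_n) (hw : D *m w = const_mx 1) :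
  irreducible Delta -> r = n.-1 /\ (forall i : 'I_n, 0 < w i ord0).
Proof.
move=> Delta_irr; have [k [p [c [Dp p_sphere]]]] := hD.
pose u i := p i - c.
have u_unit i : dotv (u i) (u i) = 1 by rewrite -sqdist_dotv p_sphere.
have D_gram i j : D i j = 2 - 2 * dotv (u i) (u j).
  by rewrite Dp (sqdist_sphere (p_sphere i) (p_sphere j)).
have u_obtuse i j : i != j -> dotv (u i) (u j) <= 0.
  by move=> ij; have := hoff i j ij; rewrite D_gram; lra.
have u_connected : gram_connected u.
  apply: (gram_connected_of_irreducible hn _ Delta_irr) => x y xy.
  have := congr1 (fun M : 'M[R]_n => M x y) hDelta.
  by rewrite !mxE (negbTE xy) D_gram /=; lra.
split.
  have [k' [q [Dq <-]]] := hr.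
  apply: affdim_affinely_independent; first lia.
  apply: (realizes_affinely_independent Dp Dq) => b b0 pb0.
  apply: (lincomb_eq0_sum_eq0 u_obtuse u_connected _ b0).
  by rewrite lincomb_translate pb0 b0 scale0r subr0.
apply: (edm_equation_solution_gt0 u_obtuse u_unit u_connected
  (w := fun j => w j ord0)).
move=> i.
have row_i : \sum_j D i j * w j ord0
    = 2 * \sum_j w j ord0 - 2 * dotv (u i) (lincomb u (fun j => w j ord0)).
  rewrite dotv_lincombr !mulr_sumr -sumrB.
  by apply: eq_bigr => j _; rewrite D_gram; ring.
have := congr1 (fun v : 'cV_n => v i ord0) hw; rewrite /= !mxE row_i; lra.
Qed.
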